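(* Let $p$ and $b$ be distinct primes and $a$ a positive integer with $b\mid p^a-1$. Then $$g\Big(\tfrac{p^{ab}-1}{b(p^a-1)},\,p^{ab}\Big)=b.$$ If moreover $p$ and $b$ are both odd, then $$g\Big(\tfrac{2(p^{ab}-1)}{b(p^a-1)},\,p^{ab}\Big)=2b.$$
   Context: For a prime power $q$ and a positive integer $k$, the Waring number $g(k,q)$ is the smallest $s$ (if it exists) such that every element of $\mathbb{F}_q$ is a sum of $s$ $k$-th powers of elements of $\mathbb{F}_q$. *)

From HB Require Import structures.
From mathcomp Require Import all_boot all_order all_algebra all_field.
Set Implicit Arguments. Unset Strict Implicit. Unset Printing Implicit Defensive.
Import GRing.Theory.
Local Open Scope ring_scope.

Definition sum_of_kth_powers (F : finFieldType) (k s : nat) (x : F) : Prop :=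
  exists t : s.-tuple F, x = \sum_(i < s) (tnth t i) ^+ k.

Definition waring_ok (F : finFieldType) (k s : nat) : Prop :=
  forall x : F, sum_of_kth_powers k s x.

Definition is_waring_number (F : finFieldType) (k s : nat) : Prop :=
  waring_ok F k s /\ (forall s', (s' < s)%N -> ~ waring_ok F k s').

(* Let A = p^a, q = A^b, k = (q - 1)/(b(A - 1)), let K = F_A be the subfield fixed
   by x |-> x^A, and let g generate the cyclic group F^*.  Then theta = g^k satisfies
   theta^A = theta * omega with omega = g^(k(A-1)) a primitive b-th root of unity in K, so
   the Galois conjugates theta * omega^i are distinct and 1, theta, ..., theta^(b-1) is a
   K-basis of F; moreover the k-th powers are exactly the c * theta^j with c in K.  In a
   sum of s k-th powers, the coordinate on theta^j is the sum of the coefficients of the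
   terms landing on theta^j: every element is a sum of b k-th powers, while
   sum_j theta^j needs a term on every theta^j.  For 2k, use the basis theta^2 (omega^2 is
   still primitive as b is odd) with coefficients squares in K: every element of K is a sum
   of two squares, but the generator eta of K^* is not a square since A - 1 is even, so
   sum_j eta * theta^(2j) needs two terms on every theta^(2j). *)

From HB Require Import structures.
From mathcomp Require Import all_boot all_order all_algebra all_field cyclic.
Set Implicit Arguments. Unset Strict Implicit. Unset Printing Implicit Defensive.
Import GRing.Theory.
Local Open Scope ring_scope.

Lemma mul_subn1_dvdn_expn_subn1 A b :
  (1 < A)%N -> (1 < b)%N -> (b %| A - 1)%N -> (b * (A - 1) %| A ^ b - 1)%N.
Proof.
move=> A_gt1 b_gt1 b_dvd.
have A_mod : (A %% b = 1)%N.
  by rewrite -(subnK (ltnW A_gt1)) -modnDml (eqP b_dvd) add0n modn_small.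
rewrite !subn1 predn_exp mulnC dvdn_pmul2l -?subn1 ?subn_gt0 //.
rewrite /dvdn -modn_summ (eq_bigr (fun=> 1%N)) => [|i _].
  by rewrite sum1_card card_ord modnn.
by rewrite -modnXm A_mod exp1n modn_small.
Qed.

Lemma exists_small_fiber s b r (rho : 'I_s -> 'I_b) :
  (s < b * r)%N -> exists j : 'I_b, (#|[pred i | rho i == j]| < r)%N.
Proof.
move=> s_lt; apply/existsP; apply: contraLR s_lt; rewrite negb_exists -leqNgt.
move=> /forallP large_fibers.
rewrite -[X in (_ <= X)%N](card_ord s) -sum1_card (partition_big rho xpredT) //=.
rewrite -[X in (X * _)%N]card_ord -sum_nat_const; apply: leq_sum => j _.
by rewrite sum1dep_card cardsE leqNgt large_fibers.
Qed.

Lemma sum_in_sets_of_card_gt (V : finZmodType) (K X Y : {set V}) (c : V) :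
  X \subset K -> [set c - y | y in Y] \subset K -> (#|K| < #|X| + #|Y|)%N ->
  exists2 x, x \in X & exists2 y, y \in Y & c = x + y.
Proof.
move=> sXK sYK card_gt.
have card_cY : #|[set c - y | y in Y]| = #|Y|.
  by apply: card_imset => y1 y2 /addrI /oppr_inj.
have [x] : exists x, x \in X :&: [set c - y | y in Y].
  apply/set0Pn; apply: contraTneq card_gt => XcY0; rewrite -leqNgt -card_cY.
  by rewrite -cardsUI XcY0 cards0 addn0 subset_leq_card // subUset sXK.
rewrite inE => /andP[Xx /imsetP[y Yy x_def]].
by exists x => //; exists y => //; rewrite x_def subrK.
Qed.

Lemma card_fixed_expr_le (F : finFieldType) n :
  (1 < n)%N -> (#|[set x : F | x ^+ n == x]| <= n)%N.
Proof.
move=> n_gt1; pose P : {poly F} := 'X^n - 'X.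
have size_P : size P = n.+1.
  by rewrite size_polyDl size_polyXn // size_polyN size_polyX.
have P_neq0 : P != 0 by rewrite -size_poly_gt0 size_P.
rewrite -ltnS -size_P cardE max_poly_roots ?enum_uniq //.
by apply/allP => x; rewrite mem_enum inE /root !hornerE subr_eq0.
Qed.

Lemma finField_prim_root (F : finFieldType) :
  exists g : F, (#|F|.-1).-primitive_root g.
Proof.
have card_gt1 : (1 < #|F|)%N.
  by rewrite (cardD1 0) (cardD1 1) !inE oner_neq0.
have units_root : all (#|F|.-1).-unity_root (enum [set~ (0 : F)]).
  apply/allP => x; rewrite mem_enum !inE => x_neq0.
  rewrite unity_rootE; apply/eqP; apply: (mulfI x_neq0).
  by rewrite -exprS prednK ?expf_card ?mulr1 // ltnW.
have order_gt0 : (0 < #|F|.-1)%N by rewrite -ltnS prednK // ltnW.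
have order_le : (#|F|.-1 <= size (enum [set~ (0 : F)%R]))%N.
  by rewrite -cardE cardsC1.
have /hasP[g _ g_prim] := has_prim_root order_gt0 units_root (enum_uniq _) order_le.
by exists g.
Qed.

Definition pFrobenius_pow (R : comNzRingType) p n of p \in [pchar R] :=
  fun x : R => x ^+ (p ^ n).

Section FrobeniusPower.
Variables (R : comNzRingType) (p n : nat) (pcharRp : p \in [pchar R]).

Lemma pFrobenius_powE x : pFrobenius_pow n pcharRp x = x ^+ (p ^ n).
Proof. by []. Qed.

Lemma pFrobenius_pow_is_nmod_morphism : nmod_morphism (pFrobenius_pow n pcharRp).
Proof.
have p_pr := pcharf_prime pcharRp.
split=> [|x y]; rewrite !pFrobenius_powE; first by rewrite expr0n expn_eq0 eqn0Ngt prime_gt0.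
by apply: exprDn_pchar; rewrite pnatX pnatE // pcharRp.
Qed.

Lemma pFrobenius_pow_is_monoid_morphism : monoid_morphism (pFrobenius_pow n pcharRp).
Proof. by split=> [|x y]; rewrite !pFrobenius_powE ?expr1n ?exprMn. Qed.

HB.instance Definition _ := GRing.isNmodMorphism.Build R R (pFrobenius_pow n pcharRp)
  pFrobenius_pow_is_nmod_morphism.
HB.instance Definition _ := GRing.isMonoidMorphism.Build R R (pFrobenius_pow n pcharRp)
  pFrobenius_pow_is_monoid_morphism.

End FrobeniusPower.

Section SumsOfPowers.
Variables (F : finFieldType) (k : nat).

Lemma sum_of_kth_powers0 : sum_of_kth_powers k 0 (0 : F).
Proof. by exists [tuple]; rewrite big_ord0. Qed.

Lemma sum_of_kth_powers_expr (y : F) : sum_of_kth_powers k 1 (y ^+ k).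
Proof. by exists [tuple y]; rewrite big_ord1. Qed.

Lemma sum_of_kth_powersD s r (x y : F) :
  sum_of_kth_powers k s x -> sum_of_kth_powers k r y ->
  sum_of_kth_powers k (s + r) (x + y).
Proof.
move=> [tx ->] [ty ->]; exists [tuple of tx ++ ty]; rewrite big_split_ord.
by congr (_ + _); apply: eq_bigr => i _; rewrite (tnth_lshift, tnth_rshift).
Qed.

Lemma sum_of_kth_powers_sum n r (x : 'I_n -> F) :
  (forall j, sum_of_kth_powers k r (x j)) ->
  sum_of_kth_powers k (n * r) (\sum_(j < n) x j).
Proof.
elim: n x => [|n IHn] x x_sum; first by rewrite big_ord0; apply: sum_of_kth_powers0.
rewrite big_ord_recr mulSn addnC; apply: sum_of_kth_powersD => //.
exact: IHn.
Qed.

End SumsOfPowers.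

Section FixedCoordinates.
Variables (F : fieldType) (sigma : {rmorphism F -> F}) (b : nat) (w t : F).
Hypotheses (w_prim : b.-primitive_root w) (sigma_w : sigma w = w)
  (sigma_t : sigma t = t * w) (t_neq0 : t != 0).

Lemma fixed_coord_eq0 (c : 'I_b -> F) :
  (forall j, sigma (c j) = c j) -> \sum_(j < b) c j * t ^+ j = 0 ->
  forall j, c j = 0.
Proof.
move=> c_fixed c_t j.
pose P := \sum_(i < b) c i *: 'X^i.
(* [sigma ^ i] maps [t] to [t * w ^+ i] and fixes the coefficients, so these [b] distinct
   points are roots of [P], which has size at most [b]. *)
have P_conj i : root P (t * w ^+ i).
  rewrite /root horner_sum; elim: i => [|i].
    by rewrite -[X in _ == X]c_t; apply/eqP/eq_bigr => l _; rewrite hornerZ hornerXn mulr1.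
  rewrite -(fmorph_eq0 sigma) rmorph_sum; congr (_ == 0); apply: eq_bigr => l _.
  by rewrite !hornerZ !hornerXn rmorphM rmorphXn rmorphM rmorphXn c_fixed sigma_t sigma_w
    -mulrA -exprS.
have conj_uniq : uniq [seq t * w ^+ i | i <- iota 0 b].
  rewrite map_inj_in_uniq ?iota_uniq // => i l; rewrite !mem_iota /= => i_lt l_lt.
  move/(mulfI t_neq0)/eqP; rewrite (eq_prim_root_expr w_prim) !modn_small //.
  by move/eqP.
have size_P : (size P <= b)%N.
  apply: leq_trans (size_sum _ _ _) _; apply/bigmax_leqP => i _.
  by rewrite (leq_trans (size_scale_leq _ _)) // size_polyXn.
have P0 : P = 0.
  apply: roots_geq_poly_eq0 conj_uniq _; last by rewrite size_map size_iota.
  by apply/allP => x /mapP[i _ ->].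
have := congr1 (fun q : {poly F} => q`_j) P0.
by rewrite coef0 coef_sumMXn (big_pred1 j) // => i; rewrite /= eqE.
Qed.

Lemma fixed_coord_inj (c d : 'I_b -> F) :
  (forall j, sigma (c j) = c j) -> (forall j, sigma (d j) = d j) ->
  \sum_(j < b) c j * t ^+ j = \sum_(j < b) d j * t ^+ j -> c =1 d.
Proof.
move=> c_fixed d_fixed cd_t j; apply/eqP; rewrite -subr_eq0; apply/eqP.
apply: (fixed_coord_eq0 (c := fun j => c j - d j)) => [i|].
  by rewrite rmorphB c_fixed d_fixed.
under eq_bigr do rewrite mulrBl.
by rewrite sumrB cd_t subrr.
Qed.

Lemma fixed_coord_fiber s (rho : 'I_s -> 'I_b) (c : 'I_s -> F) (d : 'I_b -> F) :
  (forall i, sigma (c i) = c i) -> (forall j, sigma (d j) = d j) ->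
  \sum_(j < b) d j * t ^+ j = \sum_(i < s) c i * t ^+ rho i ->
  forall j, d j = \sum_(i | rho i == j) c i.
Proof.
move=> c_fixed d_fixed dc_t; apply: fixed_coord_inj => // [j|].
  by rewrite rmorph_sum; apply: eq_bigr => i _; rewrite c_fixed.
rewrite dc_t (partition_big rho xpredT) //=; apply: eq_bigr => j _.
by rewrite mulr_suml; apply: eq_bigr => i /eqP ->.
Qed.

End FixedCoordinates.

Lemma fixed_coord_surj (F : finFieldType) (sigma : {rmorphism F -> F}) b (w t : F)
    n (e : 'I_n -> F) :
  b.-primitive_root w -> sigma w = w -> sigma t = t * w -> t != 0 ->
  injective e -> (forall i, sigma (e i) = e i) -> #|F| = (n ^ b)%N ->
  forall x, exists f : 'I_b -> 'I_n, x = \sum_(j < b) e (f j) * t ^+ j.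
Proof.
move=> w_prim sigma_w sigma_t t_neq0 e_inj e_fixed cardF x.
pose coords (f : {ffun 'I_b -> 'I_n}) := \sum_(j < b) e (f j) * t ^+ j.
have coords_inj : injective coords.
  move=> f f' /(fixed_coord_inj w_prim sigma_w sigma_t t_neq0) ff'.
  by apply/ffunP => j; apply: e_inj; apply: ff'.
have card_coords : (#|F| <= #|{ffun 'I_b -> 'I_n}|)%N.
  by rewrite card_ffun !card_ord cardF.
have /codomP[f ->] := inj_card_onto coords_inj card_coords x.
by exists f.
Qed.

Section WaringSubfield.
Variables (F : finFieldType) (p a b : nat).
Hypotheses (p_pr : prime p) (b_pr : prime b) (a_gt0 : (0 < a)%N)
  (b_dvd : (b %| p ^ a - 1)%N) (cardF : #|F| = (p ^ (a * b))%N).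

Let A := (p ^ a)%N.
Let m := (A - 1)%N.
Let k := ((p ^ (a * b) - 1) %/ (b * (p ^ a - 1)))%N.

Let b_gt0 : (0 < b)%N := prime_gt0 b_pr.

Let A_gt1 : (1 < A)%N.
Proof. by rewrite -{1}(expn0 p) ltn_exp2l // prime_gt1. Qed.

Let AE : A = m.+1.
Proof. by rewrite /m subn1 prednK // ltnW. Qed.

Let m_gt0 : (0 < m)%N.
Proof. by rewrite subn_gt0. Qed.

Let cardF_pred : #|F|.-1 = (k * (b * m))%N.
Proof.
rewrite cardF -subn1 divnK // expnM.
exact: mul_subn1_dvdn_expn_subn1 A_gt1 (prime_gt1 b_pr) b_dvd.
Qed.

Let k_gt0 : (0 < k)%N.
Proof.
have : (0 < #|F|.-1)%N by rewrite cardF -subn1 subn_gt0 expnM -{1}(expn0 A) ltn_exp2l.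
by rewrite cardF_pred muln_gt0 => /andP[].
Qed.

Let frobA : {rmorphism F -> F} := pFrobenius_pow a (card_finPcharP cardF p_pr).

Let frobAE x : frobA x = x ^+ A.
Proof. by []. Qed.

Let g : F := xchoose (finField_prim_root F).
Let g_prim : (#|F|.-1).-primitive_root g := xchooseP (finField_prim_root F).

Let theta := g ^+ k.
Let eta := g ^+ (k * b).
Let omega := g ^+ (k * m).

Let prim_root_g_exp d e :
  #|F|.-1 = (d * e)%N -> (0 < e)%N -> e.-primitive_root (g ^+ d).
Proof.
move=> order_de e_gt0; have e_dvd : (e %| #|F|.-1)%N by rewrite order_de dvdn_mull.
by have := dvdn_prim_root g_prim e_dvd; rewrite order_de mulnK.
Qed.

Let eta_prim : m.-primitive_root eta.
Proof. by apply: prim_root_g_exp; rewrite // cardF_pred mulnA. Qed.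

Let omega_prim : b.-primitive_root omega.
Proof. by apply: prim_root_g_exp; rewrite // cardF_pred (mulnC b) mulnA. Qed.

Let g_neq0 : g != 0.
Proof.
apply: contra_eq_neq (prim_expr_order g_prim) => ->.
by rewrite cardF_pred expr0n !muln_eq0 !eqn0Ngt k_gt0 b_gt0 m_gt0 eq_sym oner_eq0.
Qed.

Let eta_neq0 : eta != 0. Proof. exact: expf_neq0. Qed.
Let theta_neq0 : theta != 0. Proof. exact: expf_neq0. Qed.

Let frobA_eta : frobA eta = eta.
Proof. by rewrite frobAE AE exprS (prim_expr_order eta_prim) mulr1. Qed.

Let frobA_omega : frobA omega = omega.
Proof.
have b_dvd_m : (b %| m)%N := b_dvd.
rewrite frobAE AE exprS -(divnK b_dvd_m) mulnC exprM (prim_expr_order omega_prim).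
by rewrite expr1n mulr1.
Qed.

Let frobA_theta : frobA theta = theta * omega.
Proof. by rewrite frobAE AE -!exprM -exprD mulnS. Qed.

(* On [0 <= i <= m], enumerates the fixed field of [frobA] as [0, 1, eta, ..., eta ^+ m.-1]. *)
Let Kelt (i : nat) : F := if i is l.+1 then eta ^+ l else 0.

Let frobA_Kelt i : frobA (Kelt i) = Kelt i.
Proof. by case: i => [|l]; rewrite /= ?rmorph0 // rmorphXn frobA_eta. Qed.

Let Kelt_inj : injective (fun i : 'I_A => Kelt i).
Proof.
move=> [[|i] i_lt] [[|j] j_lt] /= /eqP Kelt_ij; apply: val_inj => //=.
- by move: Kelt_ij; rewrite eq_sym expf_eq0 (negbTE eta_neq0) andbF.
- by move: Kelt_ij; rewrite expf_eq0 (negbTE eta_neq0) andbF.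
move: Kelt_ij; rewrite AE !ltnS in i_lt j_lt.
by rewrite (eq_prim_root_expr eta_prim) !modn_small // => /eqP ->.
Qed.

Lemma kpow_Kelt i j : exists y, y ^+ k = Kelt i * theta ^+ j.
Proof.
case: i => [|i] /=; first by exists 0; rewrite mul0r expr0n eqn0Ngt k_gt0.
by exists (g ^+ (b * i + j)); rewrite -!exprM -exprD mulnC mulnDr mulnA.
Qed.

Lemma kpowP y : exists ij : 'I_A * 'I_b, y ^+ k = Kelt ij.1 * theta ^+ ij.2.
Proof.
have [-> | y_neq0] := eqVneq y 0.
  exists (Ordinal (ltnW A_gt1), Ordinal b_gt0); by rewrite /= mul0r expr0n eqn0Ngt k_gt0.
have /(prim_rootP g_prim)[i ->] : y ^+ #|F|.-1 = 1.
  by apply: (mulfI y_neq0); rewrite -exprS prednK ?expf_card ?mulr1 // (cardD1 y).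
have Kelt_lt : (((i %/ b) %% m).+1 < A)%N by rewrite AE ltnS ltn_pmod.
exists (Ordinal Kelt_lt, Ordinal (ltn_pmod i b_gt0)) => /=.
rewrite (prim_expr_mod eta_prim) -!exprM -exprD; congr (g ^+ _).
by rewrite -mulnA (mulnC b) -mulnDr -divn_eq mulnC.
Qed.

Lemma waring_ok_b : waring_ok F k b.
Proof.
move=> x; have [|f ->] := fixed_coord_surj omega_prim frobA_omega frobA_theta theta_neq0
  Kelt_inj frobA_Kelt _ x; first by rewrite cardF expnM.
suff : sum_of_kth_powers k (b * 1) (\sum_(j < b) Kelt (f j) * theta ^+ j) by rewrite muln1.
apply: sum_of_kth_powers_sum => j.
by have [y <-] := kpow_Kelt (f j) j; apply: sum_of_kth_powers_expr.
Qed.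

Lemma not_waring_ok_lt_b s : (s < b)%N -> ~ waring_ok F k s.
Proof.
move=> s_lt /(_ (\sum_(j < b) 1 * theta ^+ j))[ys ys_sum].
rewrite -[b]muln1 in s_lt.
have [ij ij_kpow] := fin_all_exists (fun l => kpowP (tnth ys l)).
have coords : \sum_(j < b) 1 * theta ^+ j = \sum_(l < s) Kelt (ij l).1 * theta ^+ (ij l).2.
  by rewrite ys_sum; apply: eq_bigr => l _.
have [j] := exists_small_fiber (fun l => (ij l).2) s_lt.
rewrite ltnS leqn0 => /eqP/card0_eq fiber0.
have := fixed_coord_fiber omega_prim frobA_omega frobA_theta theta_neq0
  (fun l => frobA_Kelt _) (fun _ => rmorph1 frobA) coords j.
by rewrite big_pred0 => [/eqP|l]; [rewrite oner_eq0 | exact: fiber0 l].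
Qed.

Lemma is_waring_number_b : is_waring_number F k b.
Proof. by split; [exact: waring_ok_b | exact: not_waring_ok_lt_b]. Qed.

Hypotheses (p_odd : odd p) (b_odd : odd b).

Let m_even : ~~ odd m.
Proof. by have := congr1 odd AE; rewrite /A oddX p_odd orbT /= => <-. Qed.

Let m_gt1 : (1 < m)%N.
Proof. by move: m_gt0 m_even; case: (m) => [|[]]. Qed.

Let double_half_m : (m./2).*2 = m.
Proof. by rewrite -{2}(odd_double_half m) (negbTE m_even). Qed.

Let m_half_lt : ((m./2).+1 <= A)%N.
Proof. by rewrite AE ltnS -{2}double_half_m -addnn leq_addl. Qed.

(* [eta] generates the nonzero fixed elements, a cyclic group of even order [m]. *)
Lemma Kelt_sqr_neq_eta i : Kelt i ^+ 2 != eta.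
Proof.
case: i => [|i] /=; first by rewrite expr0n eq_sym.
rewrite -exprM -{2}(expr1 eta) (eq_prim_root_expr eta_prim) (modn_small m_gt1).
by apply/negP => /eqP/(congr1 odd); rewrite odd_mod ?(negbTE m_even) // oddM andbF.
Qed.

Let double_lt_m j : (j < m./2)%N -> (j * 2 < m)%N.
Proof. by rewrite -{2}double_half_m -muln2 ltn_mul2r. Qed.

Let Kelt_sqr_inj : injective (fun j : 'I_(m./2).+1 => Kelt j ^+ 2).
Proof.
move=> [[|j1] j1_lt] [[|j2] j2_lt] /= /eqP sqr_eq; apply: val_inj => //=; move: sqr_eq.
- by rewrite expr0n eq_sym sqrf_eq0 expf_eq0 (negbTE eta_neq0) andbF.
- by rewrite expr0n sqrf_eq0 expf_eq0 (negbTE eta_neq0) andbF.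
rewrite -!(exprM eta) (eq_prim_root_expr eta_prim) !modn_small ?double_lt_m //.
by rewrite eqn_pmul2r // => /eqP ->.
Qed.

Let frobA_Kelt_sqr i : frobA (Kelt i ^+ 2) = Kelt i ^+ 2.
Proof. by rewrite rmorphXn frobA_Kelt. Qed.

Lemma Kelt_sum_two_sqr (i : 'I_A) :
  exists i1 i2 : 'I_A, Kelt i = Kelt i1 ^+ 2 + Kelt i2 ^+ 2.
Proof.
(* The squares and [Kelt i] minus the squares are two sets of size [m./2 + 1] inside the
   fixed field, which has at most [A = m + 1] elements. *)
pose Ksq := [set Kelt j ^+ 2 | j : 'I_(m./2).+1].
have card_Ksq : #|Ksq| = (m./2).+1 by rewrite card_imset ?card_ord.
have fixed_Ksq : Ksq \subset [set x : F | x ^+ A == x].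
  by apply/subsetP => _ /imsetP[j _ ->]; rewrite inE -frobAE frobA_Kelt_sqr.
have fixed_Ksq_shift : [set Kelt i - y | y in Ksq] \subset [set x : F | x ^+ A == x].
  apply/subsetP => _ /imsetP[y Ksq_y ->]; move/subsetP/(_ y Ksq_y): fixed_Ksq.
  by rewrite !inE -!frobAE rmorphB frobA_Kelt => /eqP ->.
have card_lt : (#|[set x : F | x ^+ A == x]| < #|Ksq| + #|Ksq|)%N.
  rewrite (leq_ltn_trans (card_fixed_expr_le F A_gt1)) // card_Ksq.
  by rewrite addSn addnS addnn double_half_m AE.
have [_ /imsetP[j1 _ ->] [_ /imsetP[j2 _ ->] two_sqr]] :=
  sum_in_sets_of_card_gt fixed_Ksq fixed_Ksq_shift card_lt.
by exists (widen_ord m_half_lt j1), (widen_ord m_half_lt j2).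
Qed.

Let omega2_prim : b.-primitive_root (omega ^+ 2).
Proof. by rewrite prim_root_exp_coprime // coprime2n. Qed.

Let frobA_omega2 : frobA (omega ^+ 2) = omega ^+ 2.
Proof. by rewrite rmorphXn frobA_omega. Qed.

Let frobA_theta2 : frobA (theta ^+ 2) = theta ^+ 2 * omega ^+ 2.
Proof. by rewrite rmorphXn frobA_theta exprMn. Qed.

Lemma kpow2_Kelt i j : exists y, y ^+ (2 * k) = Kelt i ^+ 2 * (theta ^+ 2) ^+ j.
Proof.
have [y y_kpow] := kpow_Kelt i j.
by exists y; rewrite mulnC exprM y_kpow exprMn -!(exprM theta) mulnC.
Qed.

Lemma waring_ok_2b : waring_ok F (2 * k) (2 * b).
Proof.
move=> x; have [|f ->] := fixed_coord_surj omega2_prim frobA_omega2 frobA_theta2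
  (expf_neq0 2 theta_neq0) Kelt_inj frobA_Kelt _ x; first by rewrite cardF expnM.
rewrite [(2 * b)%N]mulnC; apply: sum_of_kth_powers_sum => j.
have [i1 [i2 ->]] := Kelt_sum_two_sqr (f j); rewrite mulrDl.
have [y1 <-] := kpow2_Kelt i1 j; have [y2 <-] := kpow2_Kelt i2 j.
by apply: (sum_of_kth_powersD (s := 1) (r := 1)); apply: sum_of_kth_powers_expr.
Qed.

Lemma not_waring_ok_lt_2b s : (s < 2 * b)%N -> ~ waring_ok F (2 * k) s.
Proof.
move=> s_lt /(_ (\sum_(j < b) eta * (theta ^+ 2) ^+ j))[ys ys_sum].
rewrite mulnC in s_lt.
have [ij ij_kpow] := fin_all_exists (fun l => kpowP (tnth ys l)).
have coords : \sum_(j < b) eta * (theta ^+ 2) ^+ j =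
    \sum_(l < s) Kelt (ij l).1 ^+ 2 * (theta ^+ 2) ^+ (ij l).2.
  rewrite ys_sum; apply: eq_bigr => l _.
  by rewrite mulnC exprM ij_kpow exprMn -!(exprM theta) mulnC.
have [j] := exists_small_fiber (fun l => (ij l).2) s_lt; rewrite ltnS => fiber_le1.
have := fixed_coord_fiber omega2_prim frobA_omega2 frobA_theta2 (expf_neq0 2 theta_neq0)
  (fun l => frobA_Kelt_sqr _) (fun _ => frobA_eta) coords j.
case: (pickP [pred l | (ij l).2 == j]) => [l0 fiber_l0 | fiber0].
  have /card_le1P/(_ l0 fiber_l0) fiber1 := fiber_le1.
  rewrite (big_pred1 l0 fiber1) => /eqP.
  by rewrite eq_sym (negbTE (Kelt_sqr_neq_eta _)).
by rewrite big_pred0 // => /eqP; rewrite (negbTE eta_neq0).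
Qed.

Lemma is_waring_number_2b :
  is_waring_number F (2 * (p ^ (a * b) - 1) %/ (b * (p ^ a - 1))) (2 * b).
Proof.
have k_dvd : (b * (p ^ a - 1) %| p ^ (a * b) - 1)%N.
  by rewrite expnM mul_subn1_dvdn_expn_subn1 // prime_gt1.
by rewrite -muln_divA //; split; [exact: waring_ok_2b | exact: not_waring_ok_lt_2b].
Qed.

End WaringSubfield.

Theorem mainTheorem7 (p b a : nat) :
  prime p -> prime b -> p <> b -> (0 < a)%N -> (b %| p ^ a - 1)%N ->
  (forall F : finFieldType, #|F| = (p ^ (a * b))%N ->
     is_waring_number F ((p ^ (a * b) - 1) %/ (b * (p ^ a - 1))) b)
  /\
  (odd p -> odd b ->
   forall F : finFieldType, #|F| = (p ^ (a * b))%N ->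
     is_waring_number F (2 * (p ^ (a * b) - 1) %/ (b * (p ^ a - 1))) (2 * b)).
Proof.
move=> p_pr b_pr _ a_gt0 b_dvd; split=> [F cardF | p_odd b_odd F cardF].
  exact: is_waring_number_b p_pr b_pr a_gt0 b_dvd cardF.
exact: is_waring_number_2b p_pr b_pr a_gt0 b_dvd cardF p_odd b_odd.
Qed.
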